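(* Let $s,t,z$ be positive integers, let $\lambda$ be an integer with $0\le\lambda\le z$, and put $\theta=ts+\lambda$. Let $A_{i,j}$ ($0\le i\le t-1$, $0\le j\le s-1$) be matrices of size $\frac{m}{t}\times\frac{m}{s}$ and $B_{k,l}$ ($0\le k\le s-1$, $0\le l\le t-1$) matrices of size $\frac ms\times\frac mt$ over a field, and define $C_A(x)=\sum_{i=0}^{t-1}\sum_{j=0}^{s-1}A_{i,j}x^{j+is}$, $C_B(x)=\sum_{k=0}^{s-1}\sum_{l=0}^{t-1}B_{k,l}x^{(s-1-k)+\theta l}$, $C_Y(x)=C_A(x)C_B(x)$. Then the $t^2$ integers $s-1+si+\theta l$ ($0\le i,l\le t-1$) are pairwise distinct, and for every $i,l\in\{0,\dots,t-1\}$ the coefficient of $x^{s-1+si+\theta l}$ in $C_Y(x)$ is $\sum_{j=0}^{s-1}A_{i,j}B_{j,l}$; that is, every block $Y_{i,l}=\sum_{j}A_{i,j}B_{j,l}$ of $Y=A^TB$ can be read off from $C_Y$.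
   Context: $A_{i,j}$ are the blocks of $A^T$ and $B_{k,l}$ the blocks of $B$ when $A,B\in\mathbb F^{m\times m}$ are split into $s$ row-wise and $t$ column-wise parts; these are the Adaptive Gap Entangled (AGE) codes with parameter $\lambda$. *)

From mathcomp Require Import all_boot all_algebra.
Set Implicit Arguments. Unset Strict Implicit. Unset Printing Implicit Defensive.
Import GRing.Theory.
Local Open Scope ring_scope.

(* A polynomial with (possibly rectangular) matrix coefficients,
   represented by its coefficient sequence: coefficient of x^n is c n.
   Only finitely many are nonzero in our uses. *)
Definition mxpoly_coef (F : fieldType) (p q : nat) := nat -> 'M[F]_(p, q).

Definition CA (F : fieldType) (p q s t : nat)
  (A : 'I_t -> 'I_s -> 'M[F]_(p, q)) : mxpoly_coef F p q :=
  fun n => \sum_(i < t) \sum_(j < s) (if (j + i * s)%N == n then A i j else 0).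

Definition CB (F : fieldType) (q r s t theta : nat)
  (B : 'I_s -> 'I_t -> 'M[F]_(q, r)) : mxpoly_coef F q r :=
  fun n => \sum_(k < s) \sum_(l < t)
             (if ((s - 1 - k) + theta * l)%N == n then B k l else 0).

Definition mxpoly_mul_coef (F : fieldType) (p q r : nat)
  (P : mxpoly_coef F p q) (Q : mxpoly_coef F q r) : mxpoly_coef F p r :=
  fun n => \sum_(a < n.+1) (P a *m Q (n - a)%N).

From mathcomp Require Import all_boot all_algebra zify.
Set Implicit Arguments. Unset Strict Implicit. Unset Printing Implicit Defensive.
Import GRing.Theory.
Local Open Scope ring_scope.

(* The coefficient of x^n in C_A C_B is the sum of the products A_{i',j'} B_{k,l'}
   whose exponents (j' + s i') + (s - 1 - k + theta l') add up to n.  Since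
   theta >= t s, the part j' + s i' + s - 1 - k lies below theta + s - 1 while
   s - 1 + s i lies in [s - 1, theta), so for n = s - 1 + s i + theta l the
   level l' must be l; then j' + s i' = k + s i with j', k < s forces i' = i and
   k = j'. *)

Section MxPolyMul.

Variables (F : fieldType) (p q r : nat).

Lemma mxpoly_mul_coef_suml (I : Type) (rs : seq I)
    (P : I -> mxpoly_coef F p q) (Q : mxpoly_coef F q r) (n : nat) :
  mxpoly_mul_coef (fun k => \sum_(u <- rs) P u k) Q n =
  \sum_(u <- rs) mxpoly_mul_coef (P u) Q n.
Proof.
rewrite /mxpoly_mul_coef exchange_big /=.
by apply: eq_bigr => a _; rewrite mulmx_suml.
Qed.

Lemma mxpoly_mul_coef_sumr (I : Type) (rs : seq I)
    (P : mxpoly_coef F p q) (Q : I -> mxpoly_coef F q r) (n : nat) :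
  mxpoly_mul_coef P (fun k => \sum_(v <- rs) Q v k) n =
  \sum_(v <- rs) mxpoly_mul_coef P (Q v) n.
Proof.
rewrite /mxpoly_mul_coef exchange_big /=.
by apply: eq_bigr => a _; rewrite mulmx_sumr.
Qed.

Lemma mxpoly_mul_coef_monomial (a b n : nat) (M : 'M[F]_(p, q)) (N : 'M[F]_(q, r)) :
  mxpoly_mul_coef (fun k => if a == k then M else 0)
                  (fun k => if b == k then N else 0) n =
  if (a + b == n)%N then M *m N else 0.
Proof.
rewrite /mxpoly_mul_coef; case: (leqP a n) => [le_an | lt_na].
  have -> : (a + b == n)%N = (b == n - a)%N by apply/eqP/eqP; lia.
  rewrite (bigD1 (Ordinal (le_an : a < n.+1)%N)) //= eqxx big1 ?addr0.
    by case: eqP; rewrite ?mulmx0.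
  by move=> c; rewrite -val_eqE /= eq_sym => /negbTE ->; rewrite mul0mx.
have -> : (a + b == n)%N = false by apply/eqP; lia.
apply: big1 => c _; case: eqP => [ac|]; last by rewrite mul0mx.
by have := ltn_ord c; lia.
Qed.

End MxPolyMul.

Lemma coef_CA_mul_CB (F : fieldType) (p q r s t theta : nat)
    (A : 'I_t -> 'I_s -> 'M[F]_(p, q)) (B : 'I_s -> 'I_t -> 'M[F]_(q, r)) (n : nat) :
  mxpoly_mul_coef (CA A) (CB theta B) n =
  \sum_(i < t) \sum_(j < s) \sum_(k < s) \sum_(l < t)
    (if (j + i * s + (s - 1 - k + theta * l) == n)%N then A i j *m B k l else 0).
Proof.
rewrite /CA /CB mxpoly_mul_coef_suml; apply: eq_bigr => i _.
rewrite mxpoly_mul_coef_suml; apply: eq_bigr => j _.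
rewrite mxpoly_mul_coef_sumr; apply: eq_bigr => k _.
rewrite mxpoly_mul_coef_sumr; apply: eq_bigr => l _.
exact: mxpoly_mul_coef_monomial.
Qed.

Lemma sum_if_eq_andb (T : finType) (V : nmodType) (y : T) (c : bool) (G : T -> V) :
  \sum_(x : T) (if (x == y) && c then G x else 0) = if c then G y else 0.
Proof. by rewrite (bigD1 y) //= eqxx big1 ?addr0 // => x /negbTE ->. Qed.

Lemma exponent_match (s t theta i l i' l' j k : nat) : (t * s <= theta)%N ->
  (i < t)%N -> (l < t)%N -> (i' < t)%N -> (l' < t)%N -> (j < s)%N -> (k < s)%N ->
  (j + i' * s + (s - 1 - k + theta * l') == s - 1 + s * i + theta * l)%N =
  [&& l' == l, k == j & i' == i].
Proof.
move=> theta_ge ilt llt i'lt l'lt jlt klt.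
have mul_step c a b : (a < b)%N -> (c * a + c <= c * b)%N.
  by move=> ab; rewrite addnC -mulnS leq_mul2l ab orbT.
have := mul_step s _ _ ilt; have := mul_step s _ _ i'lt.
rewrite [(s * t)%N]mulnC (mulnC i' s) => i'_bound i_bound.
apply/eqP/and3P => [E|[/eqP-> /eqP-> /eqP->]]; last by lia.
have ll : l' = l by case: (ltngtP l' l) => // /(mul_step theta); lia.
subst l'.
have : (j + s * i' = k + s * i)%N by lia.
case: (ltngtP i' i) => [/(mul_step s)|/(mul_step s)|->]; [lia|lia|].
by move/addIn => ->; rewrite !eqxx.
Qed.

Lemma exponent_inj (s t theta i l i' l' : nat) : (0 < s)%N -> (t * s <= theta)%N ->
  (i < t)%N -> (l < t)%N -> (i' < t)%N -> (l' < t)%N ->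
  (s - 1 + s * i + theta * l = s - 1 + s * i' + theta * l')%N -> i = i' /\ l = l'.
Proof.
move=> s_gt0 theta_ge ilt llt i'lt l'lt E.
have := exponent_match theta_ge ilt llt i'lt l'lt s_gt0 s_gt0.
rewrite E add0n subn0 addnA (mulnC i') [(s * i' + _)%N]addnC eqxx.
by move=> /esym/and3P[/eqP-> _ /eqP->].
Qed.

Theorem theorem3 (F : fieldType) (m s t z lambda : nat)
  (hs : (0 < s)%N) (ht : (0 < t)%N) (hz : (0 < z)%N)
  (hlam : (lambda <= z)%N) (hsm : (s %| m)%N) (htm : (t %| m)%N)
  (A : 'I_t -> 'I_s -> 'M[F]_(m %/ t, m %/ s))
  (B : 'I_s -> 'I_t -> 'M[F]_(m %/ s, m %/ t)) :
  let theta := (t * s + lambda)%N in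
  let CY := mxpoly_mul_coef (CA A) (CB theta B) in
  (forall i l i' l' : 'I_t,
     (s - 1 + s * i + theta * l)%N = (s - 1 + s * i' + theta * l')%N ->
     i = i' /\ l = l') /\
  (forall i l : 'I_t,
     CY (s - 1 + s * i + theta * l)%N = \sum_(j < s) (A i j *m B j l)).
Proof.
move=> theta CY; have theta_ge : (t * s <= theta)%N by apply: leq_addr.
split=> [i l i' l' | i l].
  case/(exponent_inj hs theta_ge (ltn_ord i) (ltn_ord l) (ltn_ord i') (ltn_ord l')).
  by split; apply: val_inj.
rewrite /CY coef_CA_mul_CB exchange_big; apply: eq_bigr => j _.
under eq_bigr => i' _.
  under eq_bigr => k _.
    under eq_bigr => l' _.
      rewrite (exponent_match theta_ge (ltn_ord i) (ltn_ord l) (ltn_ord i'));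
        do ?exact: ltn_ord.
      over.
    by rewrite sum_if_eq_andb; over.
  by rewrite sum_if_eq_andb; over.
by rewrite -big_mkcond big_pred1_eq.
Qed.
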